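(* If $Y\subseteq 2^\omega$ is consonant, then Alice has no winning strategy in the grouped Menger game played on $2^\omega\setminus Y$.
   Context: A $k$-cover of $X$ is an open cover such that every compact subset of $X$ is contained in a member of the cover. In the game $G_1(\mathcal K,\mathcal O)$ on $X$, in round $n$ Alice picks an open $k$-cover $\mathcal U_n$ of $X$ and Bob picks $U_n\in\mathcal U_n$; Bob wins if $\{U_n:n\in\omega\}$ covers $X$, otherwise Alice wins. $Y\subseteq 2^\omega$ is consonant iff Alice has no winning strategy in $G_1(\mathcal K,\mathcal O)$ played on $2^\omega\setminus Y$. Grouped Menger game on $X\subseteq 2^\omega$: in each round $n\in\omega$ Alice selects a natural number $l_n>0$ and then the players play $l_n$ subrounds of the Menger game, indexed by $i\in[L_n,L_{n+1})$ where $L_0=0$, $L_{n+1}=l_0+\dots+l_n$: in subround $i$ Alice picks an open cover $\mathcal U_i$ of $X$ and Bob picks a finite $\mathcal F_i\subseteq\mathcal U_i$. Bob wins if $X=\bigcup_{n\in\omega}\bigcap_{i\in[L_n,L_{n+1})}\bigcup\mathcal F_i$; otherwise Alice wins. *)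

From HB Require Import structures.
From mathcomp Require Import all_boot all_order all_algebra.
From mathcomp Require Import all_classical all_reals all_analysis.
Set Implicit Arguments. Unset Strict Implicit. Unset Printing Implicit Defensive.
Local Open Scope classical_set_scope.

(* Open subsets of a subspace X are represented by (traces of) open subsets
   of cantor_space; only their intersections with X matter in the games. *)
Notation C := cantor_space.

Definition open_cover (X : set C) (U : set (set C)) : Prop :=
  (forall V, U V -> open V) /\ X `<=` \bigcup_(V in U) V.

Definition k_cover (X : set C) (U : set (set C)) : Prop :=
  open_cover X U /\
  forall K : set C, K `<=` X -> compact K -> exists2 V, U V & K `<=` V.

Definition hist {A : Type} (f : nat -> A) (n : nat) : seq A :=
  [seq f i | i <- iota 0 n].

Definition G1KO_strategy (X : set C) (sigma : seq (set C) -> set (set C)) :=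
  forall h, k_cover X (sigma h).

Definition G1KO_winning (X : set C) (sigma : seq (set C) -> set (set C)) :=
  G1KO_strategy X sigma /\
  forall U : nat -> set C, (forall n, sigma (hist U n) (U n)) ->
    ~ (X `<=` \bigcup_n U n).

Definition Alice_wins_G1KO (X : set C) :=
  exists sigma, G1KO_winning X sigma.

Definition consonant (Y : set C) : Prop := ~ Alice_wins_G1KO (~` Y).

(* Alice's strategy: from Bob's previous moves F_0..F_{i-1} (finite families)
   it gives the length l_n > 0 of the next round (used when i = L_n) and
   the open cover U_i of the current subround. *)
Record gm_strategy := GMStrat {
  gm_len : seq (seq (set C)) -> nat;
  gm_cov : seq (seq (set C)) -> set (set C) }.

Definition gm_valid (X : set C) (s : gm_strategy) :=
  forall h, 0 < gm_len s h /\ open_cover X (gm_cov s h).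

Fixpoint gm_L (s : gm_strategy) (F : nat -> seq (set C)) (n : nat) : nat :=
  match n with
  | 0 => 0
  | n'.+1 => gm_L s F n' + gm_len s (hist F (gm_L s F n'))
  end.

Definition gm_legal (s : gm_strategy) (F : nat -> seq (set C)) :=
  forall i, forall V, V \in F i -> gm_cov s (hist F i) V.

Definition gm_Bob_wins (X : set C) (s : gm_strategy) (F : nat -> seq (set C)) :=
  X `<=` \bigcup_n \bigcap_(i in [set i | gm_L s F n <= i < gm_L s F n.+1]%N)
           \bigcup_(V in [set V | V \in F i]) V.

Definition Alice_wins_grouped_Menger (X : set C) :=
  exists s : gm_strategy, gm_valid X s /\
    forall F, gm_legal s F -> ~ gm_Bob_wins X s F.

From mathcomp Require Import all_boot all_classical all_reals all_analysis.
Local Open Scope classical_set_scope.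
Set Implicit Arguments. Unset Strict Implicit. Unset Printing Implicit Defensive.

(* Given a strategy s of Alice in the grouped Menger game on X, Alice plays
   G_1(K, O) by offering, at each move, every set ⋂_j ⋃ F_j where F_0 .. F_(l-1)
   is a complete legal round of Bob against s.  By compactness Bob can make
   each F_j cover a given compact K ⊆ X, so these sets form an open k-cover.
   Each choice of Bob in G_1 is then unfolded into a whole round of the
   grouped Menger game; the resulting play is legal against s, and the n-th
   round's intersection is the n-th choice, so if Bob's choices cover X he
   wins against s. *)

Lemma compact_finite_subcover (T : ptopologicalType) (K : set T) (U : set (set T)) :
  compact K -> (forall V, U V -> open V) -> K `<=` \bigcup_(V in U) V ->
  exists2 F : seq (set T), (forall V, V \in F -> U V) &
     K `<=` \bigcup_(V in [set V | V \in F]) V.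
Proof.
rewrite compact_cover => cK oU KU.
have [D sDU KD] := cK _ U id oU KU.
exists (finmap.enum_fset D) => [V VD|x /KD [V VD Vx]]; last by exists V.
by apply: set_mem; apply: sDU.
Qed.

Lemma size_hist (A : Type) (f : nat -> A) n : size (hist f n) = n.
Proof. by rewrite /hist size_map size_iota. Qed.

Lemma nth_hist (A : Type) (f : nat -> A) n i x0 :
  (i < n)%N -> nth x0 (hist f n) i = f i.
Proof. by move=> lt_in; rewrite /hist (nth_map 0%N) ?size_iota // nth_iota. Qed.

Section Rounds.
Variable T : topologicalType.

Fixpoint round_set (P : seq (seq (set T))) : set T :=
  if P is F :: P' then (\bigcup_(V in [set V | V \in F]) V) `&` round_set P'
  else setT.

Lemma round_setP P x : round_set P x <->
  forall j, (j < size P)%N -> exists2 V, V \in nth [::] P j & V x.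
Proof.
elim: P => [|F P IH] //=; split.
- move=> [[V VF Vx] /IH PX] [|j] //= lt_jP; by [exists V | apply: PX].
- move=> PX; split; first by have [V VF Vx] := PX 0%N isT; exists V.
  by apply/IH => j; apply: (PX j.+1).
Qed.

Lemma open_round_set P :
  (forall j, (j < size P)%N -> forall V, V \in nth [::] P j -> open V) ->
  open (round_set P).
Proof.
elim: P => [|F P IH] /= oP; first exact: openT.
apply: openI; first by apply: bigcup_open => V; apply: (oP 0%N).
by apply: IH => j; apply: (oP j.+1).
Qed.

End Rounds.

Arguments round_set {T}.

Definition history := seq (seq (set C)).

Definition legal_round (s : gm_strategy) (H P : history) :=
  size P = gm_len s H /\
  forall j, (j < size P)%N ->
    forall V, V \in nth [::] P j -> gm_cov s (H ++ take j P) V.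

Definition round_sets (s : gm_strategy) (H : history) : set (set C) :=
  [set W | exists2 P, legal_round s H P & round_set P = W].

Section RoundCover.
Variables (X : set C) (s : gm_strategy).
Hypothesis s_valid : gm_valid X s.

Lemma legal_moves_cover_compact (K : set C) : compact K -> K `<=` X ->
  forall m H, exists P : history, [/\ size P = m,
    forall j, (j < size P)%N ->
      forall V, V \in nth [::] P j -> gm_cov s (H ++ take j P) V &
    forall j, (j < size P)%N -> K `<=` \bigcup_(V in [set V | V \in nth [::] P j]) V].
Proof.
move=> cK KX; elim=> [|m IH] H; first by exists [::].
have [_ [oU XU]] := s_valid H.
have [F FU KF] := compact_finite_subcover cK oU (subset_trans KX XU).
have [P [sP legP KP]] := IH (rcons H F).
exists (F :: P); split => /=; first by rewrite sP.
- by move=> [|j] lt_jP V; [rewrite take0 cats0; apply: FU | rewrite -cat_rcons; apply: legP].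
- by move=> [|j] //=; apply: KP.
Qed.

Lemma k_cover_round_sets H : k_cover X (round_sets s H).
Proof.
have Kin (K : set C) : K `<=` X -> compact K -> exists2 W, round_sets s H W & K `<=` W.
  move=> KX cK; have [P [sP legP KP]] := legal_moves_cover_compact cK KX (gm_len s H) H.
  exists (round_set P); first by exists P.
  by move=> x Kx; apply/round_setP => j lt_jP; apply: KP.
split=> //; split.
  move=> _ [P [_ legP] <-]; apply: open_round_set => j lt_jP V VP.
  by have [_ [oU _]] := s_valid (H ++ take j P); apply/oU/legP.
move=> x Xx; have xX : [set x] `<=` X by move=> y ->.
have [|W HW xW] := Kin _ xX; first exact: compact_set1.
by exists W => //; apply: xW.
Qed.

End RoundCover.

(* A legal round realising W, chosen once and for all ([::] when there is none). *)
Definition choose_round (s : gm_strategy) (H : history) (W : set C) : history :=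
  match pselect (exists2 P, legal_round s H P & round_set P = W) with
  | left e => projT1 (cid2 e)
  | right _ => [::]
  end.

Lemma choose_roundP s H W : round_sets s H W ->
  legal_round s H (choose_round s H W) /\ round_set (choose_round s H W) = W.
Proof.
by move=> e; rewrite /choose_round; case: pselect => // e'; case: (cid2 e').
Qed.

Fixpoint replay (s : gm_strategy) (U : nat -> set C) (n : nat) : history :=
  if n is n'.+1 then replay s U n' ++ choose_round s (replay s U n') (U n')
  else [::].

Lemma eq_replay s U U' n :
  (forall i, (i < n)%N -> U i = U' i) -> replay s U n = replay s U' n.
Proof.
elim: n => [//|n IH] eqU /=.
by rewrite IH ?eqU // => i lt_in; apply/eqU/ltnW.
Qed.

(* The default setT is never read: indices stay below size h. *)
Definition G1_strategy (s : gm_strategy) (h : seq (set C)) : set (set C) :=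
  round_sets s (replay s (fun i => nth setT h i) (size h)).

Lemma G1_strategy_hist s U n :
  G1_strategy s (hist U n) = round_sets s (replay s U n).
Proof.
by rewrite /G1_strategy size_hist (@eq_replay _ _ U) // => i; apply: nth_hist.
Qed.

Section Replay.
Variables (X : set C) (s : gm_strategy) (U : nat -> set C).
Hypothesis s_valid : gm_valid X s.
Hypothesis U_follows : forall n, G1_strategy s (hist U n) (U n).

Let D := replay s U.
Let P n := choose_round s (D n) (U n).

Lemma round_P n : legal_round s (D n) (P n) /\ round_set (P n) = U n.
Proof. by apply: choose_roundP; rewrite -G1_strategy_hist. Qed.

Lemma replayS n : D n.+1 = D n ++ P n.
Proof. by []. Qed.

Lemma size_replayS n : size (D n.+1) = (size (D n) + gm_len s (D n))%N.
Proof. by rewrite replayS size_cat (proj1 (proj1 (round_P n))). Qed.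

Lemma leq_size_replay n : (n <= size (D n))%N.
Proof.
elim: n => [//|n IH]; rewrite size_replayS -addn1 leq_add //.
by have [] := s_valid (D n).
Qed.

Lemma replay_prefix n k : exists t, D (n + k) = D n ++ t.
Proof.
elim: k => [|k [t IH]]; first by exists [::]; rewrite addn0 cats0.
by exists (t ++ P (n + k)); rewrite addnS replayS IH catA.
Qed.

Lemma nth_replay_mono n m i : (n <= m)%N -> (i < size (D n))%N ->
  nth [::] (D m) i = nth [::] (D n) i.
Proof.
move=> /subnKC <- lt_iD; have [t ->] := replay_prefix n (m - n).
by rewrite nth_cat lt_iD.
Qed.

(* Move i of the unfolded play; [replay] only extends its histories, so any
   stage past i has the same entry i (lemma nth_replay). *)
Definition moves i := nth [::] (D i.+1) i.

Lemma nth_replay m i : (i < size (D m))%N -> nth [::] (D m) i = moves i.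
Proof.
move=> lt_iD; have lt_iDi : (i < size (D i.+1))%N.
  exact: leq_trans (leq_size_replay i.+1).
by rewrite /moves -(nth_replay_mono (leq_maxl m i.+1) lt_iD)
           -(nth_replay_mono (leq_maxr m i.+1) lt_iDi).
Qed.

Lemma hist_moves m k : (k <= size (D m))%N -> hist moves k = take k (D m).
Proof.
move=> le_kD; apply: (@eq_from_nth _ [::]).
  by rewrite size_hist size_take; case: ltngtP le_kD => // ->.
move=> j; rewrite size_hist => lt_jk.
by rewrite nth_hist // nth_take // nth_replay //; apply: leq_trans le_kD.
Qed.

Lemma gm_L_moves n : gm_L s moves n = size (D n).
Proof.
elim: n => [//|n IH] /=.
by rewrite IH size_replayS (hist_moves (leqnn _)) take_size.
Qed.

Lemma moves_in_round n j : (j < size (P n))%N ->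
  moves (size (D n) + j) = nth [::] (P n) j /\
  hist moves (size (D n) + j) = D n ++ take j (P n).
Proof.
move=> lt_jP; have lt_D : (size (D n) + j < size (D n.+1))%N.
  by rewrite replayS size_cat ltn_add2l.
rewrite -(nth_replay lt_D) (hist_moves (ltnW lt_D)) replayS.
by rewrite nth_cat take_cat ltnNge leq_addr /= addKn.
Qed.

Lemma replay_round_index i : exists n j,
  i = (size (D n) + j)%N /\ (j < size (P n))%N.
Proof.
suff idx m : (i < size (D m))%N -> exists n j,
    i = (size (D n) + j)%N /\ (j < size (P n))%N.
  exact: idx (leq_size_replay i.+1).
elim: m => [|m IH] lt_iD; first by [].
have [/IH //|le_Di] := ltnP i (size (D m)).
exists m, (i - size (D m))%N; split; first by rewrite subnKC.
by rewrite -(ltn_add2l (size (D m))) subnKC // -size_cat -replayS.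
Qed.

Lemma legal_moves : gm_legal s moves.
Proof.
move=> i V; have [n [j [-> lt_jP]]] := replay_round_index i.
have [-> ->] := moves_in_round lt_jP.
exact: (proj2 (proj1 (round_P n))).
Qed.

Lemma moves_win : X `<=` \bigcup_n U n -> gm_Bob_wins X s moves.
Proof.
move=> XU x Xx; have [n _ Unx] := XU x Xx.
exists n => //; rewrite !gm_L_moves => i /= /andP [le_Di lt_iD].
have lt_jP : (i - size (D n) < size (P n))%N.
  by rewrite -(ltn_add2l (size (D n))) subnKC // -size_cat -replayS.
have := Unx; rewrite -(proj2 (round_P n)) => /round_setP/(_ _ lt_jP) [V VP Vx].
by rewrite -(subnKC le_Di) (proj1 (moves_in_round lt_jP)); exists V.
Qed.

End Replay.

Theorem mainTheorem4 (Y : set cantor_space) :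
  consonant Y -> ~ Alice_wins_grouped_Menger (~` Y).
Proof.
move=> consY [s [s_valid s_wins]]; apply: consY.
exists (G1_strategy s); split=> [h|U U_follows XU].
  exact: k_cover_round_sets.
exact: s_wins _ (legal_moves s_valid U_follows) (moves_win s_valid U_follows XU).
Qed.
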